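(* For every $\mathcal{A}\subseteq[\omega]^\omega$, Player I has a winning strategy in the reaping* game with respect to $\mathcal{A}$.
   Context: For $x\subseteq\omega$ and $y\in[\omega]^\omega$, $y$ reaps $x$ if $y\subseteq^* x$ or $y\subseteq^*\omega\setminus x$ (where $A\subseteq^* B$ means $A\setminus B$ is finite). For $\mathcal{A}\subseteq[\omega]^\omega$, the reaping* game with respect to $\mathcal{A}$: at round $k$, Player I plays $i_k\in\{0,1\}$ and then Player II plays $j_k\in\{0,1\}$. Player II wins iff $j_k=1$ for infinitely many $k$, $\{k:j_k=1\}\in\mathcal{A}$, and $\{k:j_k=1\}$ reaps $\{k:i_k=1\}$. *)

From Stdlib Require Import List Arith.
Import ListNotations.

Definition infinite_set (y : nat -> Prop) : Prop :=
  forall N : nat, exists n, N <= n /\ y n.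

(* A ⊆* B : A \ B is finite *)
Definition almost_subset (a b : nat -> Prop) : Prop :=
  exists N : nat, forall n, N <= n -> a n -> b n.

Definition reaps (y x : nat -> Prop) : Prop :=
  almost_subset y x \/ almost_subset y (fun n => ~ x n).

(* A strategy for Player I: given the list [j_0; ...; j_{k-1}] of Player II's
   previous moves (Player I's own previous moves are determined by the
   strategy), it returns Player I's move i_k (true = 1, false = 0). *)
Definition strategyI := list bool -> bool.

Definition playI (sigma : strategyI) (j : nat -> bool) (k : nat) : bool :=
  sigma (map j (seq 0 k)).

Definition II_wins (A : (nat -> Prop) -> Prop) (i j : nat -> bool) : Prop :=
  let Y := fun k => j k = true in
  let X := fun k => i k = true in
  infinite_set Y /\ A Y /\ reaps Y X.

Definition winning_strategyI (A : (nat -> Prop) -> Prop) (sigma : strategyI) : Prop :=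
  forall j : nat -> bool, ~ II_wins A (playI sigma j) j.

(* Player I plays the parity of the number of 1s Player II has played so far.
   Each 1 of Player II flips that parity, so between two consecutive moves
   [j_k = 1] Player I's answer changes: on the set [{k | j_k = 1}] Player I
   plays 1 and 0 alternately, and an infinite such set is neither almost
   contained in [{k | i_k = 1}] nor in its complement. *)
From Stdlib Require Import List Arith Lia Bool.
Import ListNotations.

Definition parity_strategy : strategyI :=
  fun l => Nat.even (count_occ bool_dec l true).

Definition ones_before (j : nat -> bool) (k : nat) : nat :=
  count_occ bool_dec (map j (seq 0 k)) true.

Lemma playI_parity_strategy (j : nat -> bool) (k : nat) :
  playI parity_strategy j k = Nat.even (ones_before j k).
Proof. reflexivity. Qed.

Lemma ones_before_S (j : nat -> bool) (k : nat) :
  ones_before j (S k) = ones_before j k + (if j k then 1 else 0).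
Proof.
  unfold ones_before; rewrite seq_S, map_app, count_occ_app; simpl.
  now destruct (j k).
Qed.

Lemma even_ones_before_flip (j : nat -> bool) (k : nat) :
  j k = true -> Nat.even (ones_before j (S k)) = negb (Nat.even (ones_before j k)).
Proof.
  intros Hk; rewrite ones_before_S, Hk, Nat.add_1_r, Nat.even_succ.
  apply Nat.negb_even.
Qed.

Section ConstantParity.

Variables (j : nat -> bool) (N : nat) (b : bool).
Hypothesis parity_const :
  forall n, N <= n -> j n = true -> Nat.even (ones_before j n) = b.

(* Once a 1 has been played past [N], no further 1 can occur without
   contradicting [parity_const], so the parity stays flipped forever. *)
Lemma parity_flipped_after (n : nat) :
  N <= n -> j n = true ->
  forall m, Nat.even (ones_before j (S n + m)) = negb b.
Proof.
  intros Hn Hjn; induction m as [|m IH].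
  - now rewrite Nat.add_0_r, even_ones_before_flip, parity_const.
  - rewrite Nat.add_succ_r, ones_before_S.
    destruct (j (S n + m)) eqn:Hjm.
    + pose proof (parity_const (S n + m) ltac:(lia) Hjm) as Hb.
      rewrite IH in Hb; destruct b; discriminate.
    + now rewrite Nat.add_0_r.
Qed.

Lemma finite_ones_of_constant_parity :
  ~ infinite_set (fun k => j k = true).
Proof.
  intros Hinf.
  destruct (Hinf N) as [n1 [Hn1 Hj1]].
  destruct (Hinf (S n1)) as [n2 [Hn2 Hj2]].
  pose proof (parity_const n2 ltac:(lia) Hj2) as Hb.
  replace n2 with (S n1 + (n2 - S n1)) in Hb by lia.
  rewrite (parity_flipped_after n1 Hn1 Hj1) in Hb; destruct b; discriminate.
Qed.

End ConstantParity.

Theorem mainTheorem8 (A : (nat -> Prop) -> Prop)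
  (hA : forall y, A y -> infinite_set y) :
  exists sigma : strategyI, winning_strategyI A sigma.
Proof.
  exists parity_strategy.
  intros j [Hinf [_ [[N HN] | [N HN]]]].
  - apply (finite_ones_of_constant_parity j N true); auto.
  - apply (finite_ones_of_constant_parity j N false); auto.
    intros n Hn Hj; apply not_true_iff_false.
    rewrite <- playI_parity_strategy; exact (HN n Hn Hj).
Qed.
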